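(* Let $S,I:\mathbb{R}\to\mathbb{R}$ be $2\pi$-periodic Lipschitz functions and suppose there are $\alpha_0\in(0,\pi)$, $p,q\ge1$, $c_1,c_2>0$, $c_3\in(0,1]$ with \[ S(\theta)\le-c_1(\pi-\theta)^p\ \ (\theta\in[\alpha_0,\pi]),\qquad S(\theta)\ge c_1(\theta+\pi)^p\ \ (\theta\in[-\pi,-\alpha_0]), \] \[ 0\le I(\theta)\le c_2(\pi-|\theta|)^q\ \ (\theta\in[-\pi,\pi]),\qquad \min_{|\phi|\le\max\{|\theta|,\alpha_0\}}I(\phi)\ge c_3I(\theta)\ \ (\theta\in[-\pi,\pi]). \] Let $(\theta_i(t))$ solve \[ \dot\theta_i=\omega_i+\frac{\kappa}{N}\sum_{j=1}^NI(\theta_j)S(\theta_i),\qquad\theta_i(0)=\theta_i^0,\quad i=1,\dots,N, \] let $R(t)=\frac1N\sum_jI(\theta_j(t))$, $R_0=R(0)$, $\|\Omega\|_\infty=\max_i|\omega_i|$. Suppose $R_0>0$ and \[ \kappa>\max\left\{\frac{2(2c_2)^{p/q}}{c_1c_3}\cdot\frac{\|\Omega\|_\infty}{R_0^{1+p/q}},\ \frac{2}{c_1c_3(\pi-\alpha_0)^p}\cdot\frac{\|\Omega\|_\infty}{R_0}\right\}. \] Then (a) $R(t)>\frac{c_3R_0}{2}$ for all $t\ge0$, and (b) $\sup_{t\ge0}\theta_i(t)-\inf_{t\ge0}\theta_i(t)<2\pi$ for all $i=1,\dots,N$.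
   Context: This is the general Winfree model with influence function $I$ and sensitivity function $S$; $R$ is the average influence. *)

From Stdlib Require Import Reals.
Open Scope R_scope.

(* Real power x^p for x >= 0, with the convention 0^p = 0 (p >= 1 here).
   Stdlib's Rpower 0 p = 1, so we patch the value at 0. *)
Definition rpow (x p : R) : R := if Rle_dec x 0 then 0 else Rpower x p.

Fixpoint rsum (n : nat) (f : nat -> R) : R :=
  match n with O => 0 | S m => rsum m f + f m end.

Fixpoint rmaxabs (n : nat) (f : nat -> R) : R :=
  match n with O => 0 | S m => Rmax (rmaxabs m f) (Rabs (f m)) end.

Definition periodic2pi (f : R -> R) : Prop := forall x, f (x + 2 * PI) = f x.
Definition lipschitz (f : R -> R) : Prop :=
  exists L, forall x y, Rabs (f x - f y) <= L * Rabs (x - y).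

Definition is_glb (E : R -> Prop) (m : R) : Prop :=
  (forall x, E x -> m <= x) /\ (forall b, (forall x, E x -> b <= x) -> b <= m).

Definition avg_infl (N : nat) (I : R -> R) (theta : nat -> R -> R) (t : R) : R :=
  / INR N * rsum N (fun j => I (theta j t)).

(* The lower bound on kappa yields
   a width 0 < x < PI - alpha0 with Om <= kappa L c1 x^p and c2 x^q <= R0 / 2.
   While R > L, the coupling term kappa R S then beats every natural frequency
   on the bands alpha0 <= |theta - 2 k PI| <= PI - x, so a phase starting within
   PI - x of 2 k PI never leaves the window of radius
   max (|theta(0) - 2 k PI|, alpha0) around it and, by the last hypothesis on I,
   keeps a fraction c3 of its influence; every other phase starts within x of
   an antipode (2 k + 1) PI, where I <= R0 / 2.  Summing, R cannot reach L at a
   first crossing time, which is (a); given (a), the same trapping confines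
   every phase to an interval shorter than 2 PI, which is (b). *)

From Stdlib Require Import Reals Lra Lia Classical.
Open Scope R_scope.

Lemma Rabs_le_between a b : Rabs a <= b -> - b <= a <= b.
Proof. unfold Rabs; destruct (Rcase_abs a); lra. Qed.

Lemma Rdiv_lt_iff a b c : 0 < c -> (a / c < b <-> a < b * c).
Proof.
  intro Hc; split; intro H.
  - apply (Rmult_lt_compat_r c) in H; [| exact Hc].
    unfold Rdiv in H; rewrite Rmult_assoc, Rinv_l in H by lra; lra.
  - apply (Rmult_lt_reg_r c); [exact Hc |].
    unfold Rdiv; rewrite Rmult_assoc, Rinv_l by lra; lra.
Qed.

Lemma rpow_pos_eq x p : 0 < x -> rpow x p = Rpower x p.
Proof. intro Hx; unfold rpow; destruct (Rle_dec x 0); [lra | reflexivity]. Qed.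

Lemma rpow_nonpos x p : x <= 0 -> rpow x p = 0.
Proof. intro Hx; unfold rpow; destruct (Rle_dec x 0); [reflexivity | lra]. Qed.

Lemma rpow_pos x p : 0 < x -> 0 < rpow x p.
Proof. intro Hx; rewrite rpow_pos_eq by exact Hx; apply exp_pos. Qed.

Lemma rpow_nonneg x p : 0 <= rpow x p.
Proof.
  destruct (Rle_or_lt x 0) as [Hx | Hx].
  - rewrite rpow_nonpos by exact Hx; lra.
  - left; apply rpow_pos, Hx.
Qed.

Lemma rpow_1 x : 0 <= x -> rpow x 1 = x.
Proof.
  intros [Hx | <-]; [rewrite rpow_pos_eq by exact Hx; apply Rpower_1, Hx |].
  apply rpow_nonpos; lra.
Qed.

Lemma rpow_le a b p : 0 <= p -> 0 <= a <= b -> rpow a p <= rpow b p.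
Proof.
  intros Hp [[Ha | <-] Hab].
  - rewrite !rpow_pos_eq by lra; apply Rle_Rpower_l; lra.
  - rewrite rpow_nonpos by lra; apply rpow_nonneg.
Qed.

Lemma rpow_lt a b p : 0 < p -> 0 <= a < b -> rpow a p < rpow b p.
Proof.
  intros Hp [[Ha | <-] Hab].
  - rewrite !rpow_pos_eq by lra; apply Rlt_Rpower_l; lra.
  - rewrite rpow_nonpos by lra; apply rpow_pos, Hab.
Qed.

Lemma rpow_rpow a u v : rpow (rpow a u) v = rpow a (u * v).
Proof.
  destruct (Rle_or_lt a 0) as [Ha | Ha].
  - rewrite !(rpow_nonpos a) by exact Ha; apply rpow_nonpos; lra.
  - rewrite !(rpow_pos_eq a) by exact Ha.
    rewrite rpow_pos_eq by apply exp_pos; apply Rpower_mult.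
Qed.

Lemma rpow_div a b p : 0 < a -> 0 < b -> rpow (a / b) p = rpow a p / rpow b p.
Proof.
  intros Ha Hb.
  rewrite !rpow_pos_eq by (try apply Rdiv_lt_0_compat; assumption).
  unfold Rdiv; rewrite <- Rpower_mult_distr by (try apply Rinv_0_lt_compat; assumption).
  f_equal; unfold Rpower; rewrite ln_Rinv, <- exp_Ropp by exact Hb.
  f_equal; ring.
Qed.

Lemma rpow_1_plus a p : 0 < a -> rpow a (1 + p) = a * rpow a p.
Proof.
  intro Ha; rewrite !rpow_pos_eq by exact Ha.
  rewrite Rpower_plus, Rpower_1 by exact Ha; reflexivity.
Qed.

Lemma rpow_reaches_below a b p : 0 < p -> 0 < a -> b < rpow a p ->
  exists y, 0 < y < a /\ b <= rpow y p.
Proof.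
  intros Hp Ha Hb.
  set (m := Rmax b (rpow (a / 2) p)).
  assert (Hm : 0 < m) by (apply (Rlt_le_trans _ (rpow (a / 2) p)); [apply rpow_pos; lra | apply Rmax_r]).
  assert (Hma : m < rpow a p) by (apply Rmax_lub_lt; [exact Hb | apply rpow_lt; lra]).
  exists (rpow m (/ p)); split; [split|].
  - apply rpow_pos, Hm.
  - rewrite <- (rpow_1 a), <- (Rinv_r p), <- rpow_rpow by lra.
    apply rpow_lt; [apply Rinv_0_lt_compat, Hp | lra].
  - rewrite rpow_rpow, Rinv_l, rpow_1 by lra; apply Rmax_l.
Qed.

Lemma periodic2pi_add_nat f n x : periodic2pi f -> f (x + 2 * PI * INR n) = f x.
Proof.
  intro Hf; induction n as [| n IH].
  - f_equal; simpl; ring.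
  - rewrite S_INR, <- IH, <- (Hf (x + 2 * PI * INR n)).
    f_equal; ring.
Qed.

Lemma periodic2pi_sub_Z f k x : periodic2pi f -> f (x - 2 * PI * IZR k) = f x.
Proof.
  intro Hf; destruct k as [| n | n].
  - f_equal; simpl; ring.
  - change (IZR (Z.pos n)) with (IPR n).
    rewrite <- (periodic2pi_add_nat f (Pos.to_nat n)), INR_IPR by exact Hf.
    f_equal; ring.
  - change (IZR (Z.neg n)) with (- IPR n).
    rewrite <- (periodic2pi_add_nat f (Pos.to_nat n) x), INR_IPR by exact Hf.
    f_equal; ring.
Qed.

Lemma exists_shift_within_PI y : exists k : Z, Rabs (y - 2 * PI * IZR k) <= PI.
Proof.
  pose proof PI_RGT_0 as HPI.
  destruct (archimed ((y + PI) / (2 * PI))) as [Hup Hup1].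
  exists (up ((y + PI) / (2 * PI)) - 1)%Z; rewrite minus_IZR.
  set (u := IZR (up ((y + PI) / (2 * PI)))) in *.
  assert (Hy : y + PI = 2 * PI * ((y + PI) / (2 * PI))) by (field; lra).
  apply Rabs_le; split; nra.
Qed.

Lemma rsum_le n f g : (forall j, (j < n)%nat -> f j <= g j) -> rsum n f <= rsum n g.
Proof.
  induction n as [| n IH]; intro Hfg; simpl; [lra |].
  assert (f n <= g n) by (apply Hfg; lia).
  assert (rsum n f <= rsum n g) by (apply IH; intros; apply Hfg; lia).
  lra.
Qed.

Lemma rsum_lt n f g : (forall j, (j < n)%nat -> f j <= g j) ->
  (exists j, (j < n)%nat /\ f j < g j) -> rsum n f < rsum n g.
Proof.
  induction n as [| n IH]; intros Hfg [j [Hj Hlt]]; [lia |]; simpl.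
  assert (f n <= g n) by (apply Hfg; lia).
  destruct (Nat.eq_dec j n) as [-> | Hjn].
  - assert (rsum n f <= rsum n g) by (apply rsum_le; intros; apply Hfg; lia); lra.
  - assert (rsum n f < rsum n g); [| lra].
    apply IH; [intros; apply Hfg; lia | exists j; split; [lia | exact Hlt]].
Qed.

Lemma rsum_affine n f a b :
  rsum n (fun j => a * (f j - b)) = a * (rsum n f - INR n * b).
Proof. induction n as [| n IH]; simpl rsum; [simpl; ring |]; rewrite IH, S_INR; ring. Qed.

Lemma rsum_gt_exists n f b : INR n * b < rsum n f -> exists j, (j < n)%nat /\ b < f j.
Proof.
  induction n as [| n IH]; simpl rsum; intro Hsum; [simpl in Hsum; lra |].
  rewrite S_INR in Hsum.
  destruct (Rlt_or_le b (f n)) as [Hb | Hb]; [exists n; split; [lia | exact Hb] |].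
  destruct IH as [j [Hj Hfj]]; [lra | exists j; split; [lia | exact Hfj]].
Qed.

Lemma rsum_avg_infl N I theta t : (1 <= N)%nat ->
  rsum N (fun j => I (theta j t)) = INR N * avg_infl N I theta t.
Proof.
  intro HN; assert (0 < INR N) by (apply lt_0_INR; lia).
  unfold avg_infl; field; lra.
Qed.

Lemma rmaxabs_ge n f j : (j < n)%nat -> Rabs (f j) <= rmaxabs n f.
Proof.
  induction n as [| n IH]; intro Hj; [lia |]; simpl.
  destruct (Nat.eq_dec j n) as [-> | Hjn]; [apply Rmax_r |].
  eapply Rle_trans; [apply IH; lia | apply Rmax_l].
Qed.

Lemma rmaxabs_nonneg n f : 0 <= rmaxabs n f.
Proof. induction n as [| n IH]; simpl; [lra |]; eapply Rle_trans; [exact IH | apply Rmax_l]. Qed.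

Lemma lub_glb_within E A B : (exists y, E y) -> (forall y, E y -> A <= y <= B) ->
  exists M m, is_lub E M /\ is_glb E m /\ A <= m /\ M <= B.
Proof.
  intros Hne HAB.
  destruct (completeness E) as [M [HMub HMlub]].
  { exists B; intros y Hy; apply HAB, Hy. }
  { exact Hne. }
  destruct (completeness (fun y => E (- y))) as [M' [HM'ub HM'lub]].
  { exists (- A); intros y Hy; specialize (HAB _ Hy); lra. }
  { destruct Hne as [y Hy]; exists (- y); rewrite Ropp_involutive; exact Hy. }
  exists M, (- M'); split; [split; assumption |]; split; [split |]; [| | split].
  - intros y Hy; enough (- y <= M') by lra; apply HM'ub; rewrite Ropp_involutive; exact Hy.
  - intros b Hb; enough (M' <= - b) by lra.
    apply HM'lub; intros y Hy; specialize (Hb _ Hy); lra.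
  - enough (M' <= - A) by lra; apply HM'lub; intros y Hy; specialize (HAB _ Hy); lra.
  - apply HMlub; intros y Hy; apply HAB, Hy.
Qed.

Definition continuous_on (D : R -> Prop) (f : R -> R) : Prop :=
  forall t, D t -> limit1_in f D (f t) t.

Lemma continuous_on_subset D D' f :
  (forall t, D' t -> D t) -> continuous_on D f -> continuous_on D' f.
Proof. intros HD Hf t Ht; apply (limit1_imp f D D'); [exact HD | apply Hf, HD, Ht]. Qed.

Lemma continuous_on_reflect D f :
  continuous_on D f -> continuous_on (fun t => D (- t)) (fun t => f (- t)).
Proof.
  intros Hf t Ht eps Heps.
  destruct (Hf (- t) Ht eps Heps) as [d [Hd Hnear]].
  exists d; split; [exact Hd |]; intros s [Hs Hst].
  apply (Hnear (- s)); split; [exact Hs |].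
  simpl in *; unfold Rdist in *.
  replace (- s - - t) with (- (s - t)) by ring; rewrite Rabs_Ropp; exact Hst.
Qed.

Lemma continuous_on_opp D f : continuous_on D f -> continuous_on D (fun t => - f t).
Proof. intros Hf t Ht; apply limit_Ropp, Hf, Ht. Qed.

Lemma continuity_pt_limit1_in f D t : continuity_pt f t -> limit1_in f D (f t) t.
Proof.
  intros Hf eps Heps; destruct (Hf eps Heps) as [d [Hd Hnear]].
  exists d; split; [exact Hd |]; intros s [_ Hst].
  destruct (Req_dec s t) as [-> | Hne].
  - simpl; unfold Rdist; rewrite Rminus_diag, Rabs_R0; lra.
  - apply Hnear; split; [split; [exact I | auto] | exact Hst].
Qed.

Lemma lipschitz_limit1_in f D y : lipschitz f -> limit1_in f D (f y) y.
Proof.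
  intros [L HL] eps Heps.
  pose proof (Rabs_pos L) as HL0.
  exists (eps / (Rabs L + 1)); split; [apply Rdiv_lt_0_compat; lra |].
  intros x [_ Hx]; simpl in *; unfold Rdist in *.
  apply (Rmult_lt_compat_l (Rabs L + 1)) in Hx; [| lra].
  replace ((Rabs L + 1) * (eps / (Rabs L + 1))) with eps in Hx by (field; lra).
  pose proof (Rabs_pos (x - y)).
  assert (L * Rabs (x - y) <= Rabs L * Rabs (x - y))
    by (apply Rmult_le_compat_r; [lra | apply RRle_abs]).
  eapply Rle_lt_trans; [apply HL | nra].
Qed.

Lemma lipschitz_comp_limit1_in g f D t :
  lipschitz g -> limit1_in f D (f t) t -> limit1_in (fun s => g (f s)) D (g (f t)) t.
Proof.
  intros Hg Hf.
  apply (limit1_imp _ (Dgf D (fun _ => True) f)); [intros s Hs; split; [exact Hs | exact I] |].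
  apply (limit_comp f g D (fun _ => True) (f t)); [exact Hf | apply lipschitz_limit1_in, Hg].
Qed.

Lemma limit1_in_rsum n F D t :
  (forall j, (j < n)%nat -> limit1_in (F j) D (F j t) t) ->
  limit1_in (fun s => rsum n (fun j => F j s)) D (rsum n (fun j => F j t)) t.
Proof.
  induction n as [| n IH]; intro HF; simpl.
  - exact (limit_free (fun _ => 0) D t t).
  - apply limit_plus; [apply IH; intros; apply HF; lia | apply HF; lia].
Qed.

Lemma continuous_on_interval_near f a b s eps :
  continuous_on (fun t => a <= t <= b) f -> a <= s <= b -> 0 < eps ->
  exists d, 0 < d /\
    forall t, a <= t <= b -> Rabs (t - s) < d -> Rabs (f t - f s) < eps.
Proof.
  intros Hf Hs Heps; destruct (Hf s Hs eps Heps) as [d [Hd Hnear]].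
  exists d; split; [exact Hd |]; intros t Ht Hts; apply (Hnear t); split; assumption.
Qed.

Lemma continuous_on_right_near f a b s t eps :
  continuous_on (fun t => a <= t <= b) f -> a <= s < t -> t <= b -> 0 < eps ->
  exists u, s < u < t /\ forall v, s <= v <= u -> Rabs (f v - f s) < eps.
Proof.
  intros Hf Hst Htb Heps.
  destruct (continuous_on_interval_near f a b s eps) as [d [Hd Hnear]]; [exact Hf | lra | exact Heps |].
  pose proof (Rmin_l d (t - s)); pose proof (Rmin_r d (t - s)).
  assert (0 < Rmin d (t - s)) by (apply Rmin_pos; lra).
  exists (s + Rmin d (t - s) / 2); split; [lra |].
  intros v Hv; apply Hnear; [lra | rewrite Rabs_right; lra].
Qed.

Lemma last_crossing f a b m :
  a <= b -> continuous_on (fun t => a <= t <= b) f -> f a <= m -> m < f b ->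
  exists s, a <= s < b /\ f s <= m /\ forall t, s < t <= b -> m < f t.
Proof.
  intros Hab Hf Ha Hb.
  set (E := fun t => a <= t <= b /\ f t <= m).
  destruct (completeness E) as [s [Hub Hlub]].
  { exists b; intros t [Ht _]; lra. }
  { exists a; split; [lra | exact Ha]. }
  assert (Has : a <= s) by (apply Hub; split; [lra | exact Ha]).
  assert (Hsb : s <= b) by (apply Hlub; intros t [Ht _]; lra).
  assert (Hafter : forall t, s < t <= b -> m < f t).
  { intros t Ht; destruct (Rlt_or_le m (f t)) as [| Hft]; [assumption |].
    assert (t <= s) by (apply Hub; split; [lra | exact Hft]); lra. }
  assert (Hfs : f s <= m).
  { destruct (Rle_or_lt (f s) m) as [| Hfs]; [assumption | exfalso].
    destruct (continuous_on_interval_near f a b s (f s - m)) as [d [Hd Hnear]];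
      [exact Hf | lra | lra |].
    assert (s <= s - d); [| lra].
    apply Hlub; intros t [Ht Hft].
    destruct (Rle_or_lt t (s - d)) as [| Hts]; [assumption | exfalso].
    assert (t <= s) by (apply Hub; split; assumption).
    specialize (Hnear t Ht ltac:(rewrite Rabs_left1; lra)).
    apply Rabs_def2 in Hnear; lra. }
  exists s; split; [split; [exact Has |] | split; [exact Hfs | exact Hafter]].
  destruct (Req_dec s b) as [-> |]; lra.
Qed.

Lemma first_crossing f a b m :
  a <= b -> continuous_on (fun t => a <= t <= b) f -> m < f a -> f b <= m ->
  exists s, a < s <= b /\ f s <= m /\ forall t, a <= t < s -> m < f t.
Proof.
  intros Hab Hf Ha Hb.
  destruct (last_crossing (fun t => f (- t)) (- b) (- a) m) as [s [Hs [Hfs Hafter]]].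
  - lra.
  - eapply continuous_on_subset; [| apply continuous_on_reflect, Hf]; simpl; intros; lra.
  - rewrite Ropp_involutive; exact Hb.
  - rewrite Ropp_involutive; exact Ha.
  - exists (- s); split; [lra | split; [exact Hfs |]].
    intros t Ht; rewrite <- (Ropp_involutive t); apply Hafter; lra.
Qed.

(* While [f] sits in the barrier band [[a, c]] it strictly decreases, so it
   can never climb past [max (f t0) a]: at the last time it was below that
   level, the mean value theorem would produce a point of the band where
   [f' >= 0]. *)
Lemma trapped_below f f' a c t0 t1 : a < c ->
  continuous_on (fun t => t0 <= t <= t1) f ->
  (forall t, t0 < t < t1 -> derivable_pt_lim f t (f' t)) ->
  (forall t, t0 < t < t1 -> a <= f t <= c -> f' t < 0) ->
  f t0 < c -> forall t, t0 <= t <= t1 -> f t <= Rmax (f t0) a.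
Proof.
  intros Hac Hf Hder Hneg Hc t Ht.
  set (m := Rmax (f t0) a).
  assert (Hm0 : f t0 <= m) by apply Rmax_l.
  assert (Hma : a <= m) by apply Rmax_r.
  assert (Hmc : m < c) by (apply Rmax_lub_lt; lra).
  destruct (Rle_or_lt (f t) m) as [| Hgt]; [assumption | exfalso].
  assert (Htt : t0 < t) by (destruct (Req_dec t0 t) as [<- |]; lra).
  destruct (last_crossing f t0 t m) as [s [Hs [Hfs Hafter]]]; [lra | | exact Hm0 | exact Hgt |].
  { eapply continuous_on_subset; [| exact Hf]; simpl; intros; lra. }
  destruct (continuous_on_right_near f t0 t1 s t (c - f s)) as [u [Hu Hbelow_c]];
    [exact Hf | lra | lra | lra |].
  assert (Hfu : m < f u) by (apply Hafter; lra).
  destruct (continuous_on_right_near f t0 t1 s u (f u - f s)) as [tau [Htau Hnear]];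
    [exact Hf | lra | lra | lra |].
  assert (Hftau : f tau < f u) by (specialize (Hnear tau ltac:(lra)); apply Rabs_def2 in Hnear; lra).
  destruct (MVT_cor2 f f' tau u) as [xi [Hmvt Hxi]]; [lra | intros; apply Hder; lra |].
  assert (Hfxi : m < f xi) by (apply Hafter; lra).
  assert (f xi < c) by (specialize (Hbelow_c xi ltac:(lra)); apply Rabs_def2 in Hbelow_c; lra).
  assert (f' xi < 0) by (apply Hneg; lra).
  nra.
Qed.

Lemma trapped_above f f' a c t0 t1 : a < c ->
  continuous_on (fun t => t0 <= t <= t1) f ->
  (forall t, t0 < t < t1 -> derivable_pt_lim f t (f' t)) ->
  (forall t, t0 < t < t1 -> a <= f t <= c -> 0 < f' t) ->
  a < f t0 -> forall t, t0 <= t <= t1 -> Rmin (f t0) c <= f t.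
Proof.
  intros Hac Hf Hder Hpos Ha t Ht.
  assert (H := trapped_below (fun t => - f t) (fun t => - f' t) (- c) (- a) t0 t1).
  cbv beta in H; rewrite <- Ropp_Rmin in H.
  enough (- f t <= - Rmin (f t0) c) by lra.
  apply H; [lra | apply continuous_on_opp, Hf | | | lra | exact Ht].
  - intros s Hs; exact (derivable_pt_lim_opp f s (f' s) (Hder s Hs)).
  - intros s Hs Hb; specialize (Hpos s Hs); lra.
Qed.

Lemma coupling_pos (alpha0 p c1 c3 R0 Om kappa : R) :
  0 < alpha0 < PI -> 0 < c1 -> 0 < c3 -> 0 < R0 -> 0 <= Om ->
  kappa > 2 / (c1 * c3 * rpow (PI - alpha0) p) * Om / R0 -> 0 < kappa.
Proof.
  intros Ha0 Hc1 Hc3 HR0 HOm Hk.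
  assert (0 < rpow (PI - alpha0) p) by (apply rpow_pos; lra).
  assert (0 <= 2 / (c1 * c3 * rpow (PI - alpha0) p) * Om / R0); [| lra].
  apply Rmult_le_pos; [apply Rmult_le_pos; [| exact HOm] | left; apply Rinv_0_lt_compat, HR0].
  left; apply Rdiv_lt_0_compat; [lra | apply Rmult_lt_0_compat; [apply Rmult_lt_0_compat |]; lra].
Qed.

(* The two lower bounds on [kappa] in the theorem say precisely that
   [Om < kappa (c3 R0 / 2) c1 y^p] at [y = PI - alpha0] and at the [y] where
   [c2 y^q = R0 / 2]. *)
Lemma width_below_gap (alpha0 p c1 c3 kappa R0 Om : R) :
  0 < alpha0 < PI -> 0 < p -> 0 < c1 -> 0 < c3 -> 0 < R0 -> 0 < kappa ->
  kappa > 2 / (c1 * c3 * rpow (PI - alpha0) p) * Om / R0 ->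
  exists y, 0 < y < PI - alpha0 /\ Om <= kappa * (c3 * R0 / 2) * c1 * rpow y p.
Proof.
  intros Ha0 Hp Hc1 Hc3 HR0 Hk Hkappa.
  set (K := kappa * (c3 * R0 / 2) * c1).
  assert (HK : 0 < K) by (unfold K; repeat apply Rmult_lt_0_compat; lra).
  set (P := rpow (PI - alpha0) p) in Hkappa.
  assert (HP : 0 < P) by (apply rpow_pos; lra).
  replace (2 / (c1 * c3 * P) * Om / R0) with (Om / (K * P / kappa)) in Hkappa
    by (unfold K; field; repeat split; lra).
  apply Rdiv_lt_iff in Hkappa; [| apply Rdiv_lt_0_compat; nra].
  replace (kappa * (K * P / kappa)) with (P * K) in Hkappa by (field; lra).
  destruct (rpow_reaches_below (PI - alpha0) (Om / K) p) as [y [Hy HOm]];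
    [exact Hp | lra | apply Rdiv_lt_iff; assumption |].
  exists y; split; [exact Hy |].
  replace Om with (Om / K * K) by (field; lra).
  rewrite (Rmult_comm K); apply Rmult_le_compat_r; lra.
Qed.

Lemma width_half_influence (p q c1 c2 c3 kappa R0 Om : R) :
  0 < q -> 0 < c1 -> 0 < c2 -> 0 < c3 -> 0 < R0 -> 0 < kappa ->
  kappa > 2 * rpow (2 * c2) (p / q) / (c1 * c3) * Om / rpow R0 (1 + p / q) ->
  exists y, 0 < y /\ Om <= kappa * (c3 * R0 / 2) * c1 * rpow y p /\ c2 * rpow y q = R0 / 2.
Proof.
  intros Hq Hc1 Hc2 Hc3 HR0 Hk Hkappa.
  set (A := rpow R0 (p / q)); set (C := rpow (2 * c2) (p / q)) in Hkappa.
  assert (HA : 0 < A) by (apply rpow_pos; lra).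
  assert (HC : 0 < C) by (apply rpow_pos; lra).
  rewrite rpow_1_plus in Hkappa by exact HR0; fold A in Hkappa.
  replace (2 * C / (c1 * c3) * Om / (R0 * A))
    with (Om / (c3 * R0 / 2 * c1 * (A / C))) in Hkappa by (field; repeat split; lra).
  apply Rdiv_lt_iff in Hkappa; [| apply Rmult_lt_0_compat;
    [repeat apply Rmult_lt_0_compat; lra | apply Rdiv_lt_0_compat; assumption]].
  exists (rpow (R0 / (2 * c2)) (/ q)); split; [| split].
  - apply rpow_pos, Rdiv_lt_0_compat; lra.
  - rewrite rpow_rpow, rpow_div, (Rmult_comm (/ q)) by lra.
    change (p * / q) with (p / q); fold A C.
    replace (kappa * (c3 * R0 / 2) * c1 * (A / C))
      with (c3 * R0 / 2 * c1 * (A / C) * kappa) by ring.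
    lra.
  - rewrite rpow_rpow, Rinv_l, rpow_1 by (try apply Rlt_le, Rdiv_lt_0_compat; lra).
    field; lra.
Qed.

Lemma coupling_threshold (alpha0 p q c1 c2 c3 kappa R0 Om : R) :
  0 < alpha0 < PI -> 0 < p -> 0 < q -> 0 < c1 -> 0 < c2 -> 0 < c3 -> 0 < R0 ->
  0 < kappa ->
  kappa > Rmax (2 * rpow (2 * c2) (p / q) / (c1 * c3) * Om / rpow R0 (1 + p / q))
               (2 / (c1 * c3 * rpow (PI - alpha0) p) * Om / R0) ->
  exists x, 0 < x < PI - alpha0 /\
    Om <= kappa * (c3 * R0 / 2) * c1 * rpow x p /\ c2 * rpow x q <= R0 / 2.
Proof.
  intros Ha0 Hp Hq Hc1 Hc2 Hc3 HR0 Hk Hkappa.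
  destruct (width_below_gap alpha0 p c1 c3 kappa R0 Om) as [xa [Hxa Hcoupling_a]];
    [assumption .. | eapply Rle_lt_trans; [apply Rmax_r | exact Hkappa] |].
  destruct (width_half_influence p q c1 c2 c3 kappa R0 Om) as [xb [Hxb [Hcoupling_b Hhalf]]];
    [assumption .. | eapply Rle_lt_trans; [apply Rmax_l | exact Hkappa] |].
  assert (Hmin : 0 < Rmin xa xb) by (apply Rmin_pos; lra).
  exists (Rmin xa xb); split; [split; [exact Hmin | eapply Rle_lt_trans; [apply Rmin_l | lra]] |].
  split; [apply Rmin_case; assumption |].
  rewrite <- Hhalf; apply Rmult_le_compat_l; [lra |].
  apply rpow_le; [lra | split; [lra | apply Rmin_r]].
Qed.

Section Winfree.

Variables (S I : R -> R) (alpha0 p q c1 c2 c3 kappa x : R) (N : nat)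
  (omega : nat -> R) (theta : nat -> R -> R).

Local Notation R0 := (avg_infl N I theta 0).
Local Notation L := (c3 * avg_infl N I theta 0 / 2).

Hypothesis HSper : periodic2pi S.
Hypothesis HIper : periodic2pi I.
Hypothesis HIlip : lipschitz I.
Hypothesis Ha0 : 0 < alpha0.
Hypothesis Hx : 0 < x < PI - alpha0.
Hypothesis Hp : 0 <= p.
Hypothesis Hq : 0 <= q.
Hypothesis Hc1 : 0 < c1.
Hypothesis Hc2 : 0 < c2.
Hypothesis Hc3 : 0 < c3 <= 1.
Hypothesis Hkappa : 0 < kappa.
Hypothesis HS1 : forall th, alpha0 <= th <= PI -> S th <= - c1 * rpow (PI - th) p.
Hypothesis HS2 : forall th, - PI <= th <= - alpha0 -> S th >= c1 * rpow (th + PI) p.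
Hypothesis HI1 : forall th, - PI <= th <= PI -> 0 <= I th <= c2 * rpow (PI - Rabs th) q.
Hypothesis HI2 : forall th, - PI <= th <= PI ->
  forall phi, Rabs phi <= Rmax (Rabs th) alpha0 -> I phi >= c3 * I th.
Hypothesis HN : (1 <= N)%nat.
Hypothesis Hode : forall i, (i < N)%nat -> forall t, 0 < t ->
  derivable_pt_lim (theta i) t
    (omega i + kappa / INR N * rsum N (fun j => I (theta j t)) * S (theta i t)).
Hypothesis Hcont0 : forall i, (i < N)%nat -> forall eps, 0 < eps ->
  exists delta, 0 < delta /\ forall t, 0 <= t < delta -> Rabs (theta i t - theta i 0) < eps.
Hypothesis HR0 : 0 < R0.

(* [x] is the half-width of the zones around the antipodes [(2 k + 1) PI] that
   the coupling does not control; outside them it dominates the frequencies. *)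
Hypothesis Hcoupling : rmaxabs N omega <= kappa * L * c1 * rpow x p.
Hypothesis Hhalf_infl : c2 * rpow x q <= R0 / 2.

Lemma omega_le_coupling i r : (i < N)%nat -> L < r ->
  Rabs (omega i) < kappa * r * c1 * rpow x p.
Proof.
  intros Hi Hr.
  assert (Hxp : 0 < rpow x p) by (apply rpow_pos; lra).
  eapply Rle_lt_trans; [apply (Rle_trans _ _ _ (rmaxabs_ge N omega i Hi) Hcoupling) |].
  apply Rmult_lt_compat_r; [exact Hxp |].
  apply Rmult_lt_compat_r; [exact Hc1 |].
  apply Rmult_lt_compat_l; [exact Hkappa | exact Hr].
Qed.

Lemma drift_neg i k r y : (i < N)%nat -> L < r ->
  2 * PI * IZR k + alpha0 <= y <= 2 * PI * IZR k + PI - x ->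
  omega i + kappa * r * S y < 0.
Proof.
  intros Hi Hr Hy.
  assert (Hom := omega_le_coupling i r Hi Hr).
  assert (HS : S y <= - c1 * rpow x p).
  { rewrite <- (periodic2pi_sub_Z S k y HSper).
    eapply Rle_trans; [apply HS1; lra |].
    assert (rpow x p <= rpow (PI - (y - 2 * PI * IZR k)) p) by (apply rpow_le; lra).
    nra. }
  assert (Hr0 : 0 < kappa * r) by (apply Rmult_lt_0_compat; nra).
  apply (Rmult_le_compat_l (kappa * r)) in HS; [| lra].
  pose proof (Rle_abs (omega i)); lra.
Qed.

Lemma drift_pos i k r y : (i < N)%nat -> L < r ->
  2 * PI * IZR k - (PI - x) <= y <= 2 * PI * IZR k - alpha0 ->
  0 < omega i + kappa * r * S y.
Proof.
  intros Hi Hr Hy.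
  assert (Hom := omega_le_coupling i r Hi Hr).
  assert (HS : c1 * rpow x p <= S y).
  { rewrite <- (periodic2pi_sub_Z S k y HSper).
    eapply Rle_trans; [| apply Rge_le, HS2; lra].
    assert (rpow x p <= rpow (y - 2 * PI * IZR k + PI) p) by (apply rpow_le; lra).
    nra. }
  assert (Hr0 : 0 < kappa * r) by (apply Rmult_lt_0_compat; nra).
  apply (Rmult_le_compat_l (kappa * r)) in HS; [| lra].
  pose proof (Rabs_pos (omega i)); pose proof (Rle_abs (- omega i)); rewrite Rabs_Ropp in *; lra.
Qed.

Lemma theta_deriv i t : (i < N)%nat -> 0 < t ->
  derivable_pt_lim (theta i) t (omega i + kappa * avg_infl N I theta t * S (theta i t)).
Proof.
  intros Hi Ht; unfold avg_infl.
  replace (kappa * (/ INR N * rsum N (fun j => I (theta j t))))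
    with (kappa / INR N * rsum N (fun j => I (theta j t))) by (unfold Rdiv; ring).
  apply Hode; assumption.
Qed.

Lemma theta_continuous i : (i < N)%nat -> continuous_on (fun t => 0 <= t) (theta i).
Proof.
  intros Hi t [Ht | <-].
  - apply continuity_pt_limit1_in, derivable_continuous_pt.
    exists (omega i + kappa * avg_infl N I theta t * S (theta i t)); apply theta_deriv; assumption.
  - intros eps Heps; destruct (Hcont0 i Hi eps Heps) as [d [Hd Hnear]].
    exists d; split; [exact Hd |]; intros s [Hs Hsd]; simpl in *; unfold Rdist in *.
    rewrite Rminus_0_r, Rabs_right in Hsd by lra; apply Hnear; lra.
Qed.

Lemma avg_infl_continuous : continuous_on (fun t => 0 <= t) (avg_infl N I theta).
Proof.
  intros t Ht; unfold avg_infl.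
  apply limit_mul; [exact (limit_free (fun _ => / INR N) _ t t) |].
  apply (limit1_in_rsum N (fun j s => I (theta j s))); intros j Hj.
  apply lipschitz_comp_limit1_in; [exact HIlip | apply theta_continuous; assumption].
Qed.

Lemma stays_below i k t0 t : (i < N)%nat -> 0 <= t0 <= t ->
  (forall s, t0 < s < t -> L < avg_infl N I theta s) ->
  theta i t0 < 2 * PI * IZR k + PI - x ->
  theta i t <= Rmax (theta i t0) (2 * PI * IZR k + alpha0).
Proof.
  intros Hi Ht HL Hstart.
  apply (trapped_below (theta i) (fun s => omega i + kappa * avg_infl N I theta s * S (theta i s))
           _ (2 * PI * IZR k + PI - x) t0 t); [lra | | | | exact Hstart | lra].
  - eapply continuous_on_subset; [| apply theta_continuous, Hi]; simpl; intros; lra.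
  - intros s Hs; apply theta_deriv; [exact Hi | lra].
  - intros s Hs Hband; apply (drift_neg i k); [exact Hi | apply HL, Hs | exact Hband].
Qed.

Lemma stays_above i k t0 t : (i < N)%nat -> 0 <= t0 <= t ->
  (forall s, t0 < s < t -> L < avg_infl N I theta s) ->
  2 * PI * IZR k - (PI - x) < theta i t0 ->
  Rmin (theta i t0) (2 * PI * IZR k - alpha0) <= theta i t.
Proof.
  intros Hi Ht HL Hstart.
  apply (trapped_above (theta i) (fun s => omega i + kappa * avg_infl N I theta s * S (theta i s))
           (2 * PI * IZR k - (PI - x)) _ t0 t); [lra | | | | exact Hstart | lra].
  - eapply continuous_on_subset; [| apply theta_continuous, Hi]; simpl; intros; lra.
  - intros s Hs; apply theta_deriv; [exact Hi | lra].
  - intros s Hs Hband; apply (drift_pos i k); [exact Hi | apply HL, Hs | exact Hband].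
Qed.

Lemma I_within_PI y k : Rabs (y - 2 * PI * IZR k) <= PI ->
  0 <= I y <= c2 * rpow (PI - Rabs (y - 2 * PI * IZR k)) q.
Proof.
  intro Hy; rewrite <- (periodic2pi_sub_Z I k y HIper).
  apply HI1, Rabs_le_between, Hy.
Qed.

Lemma I_nonneg y : 0 <= I y.
Proof. destruct (exists_shift_within_PI y) as [k Hk]; apply (I_within_PI y k Hk). Qed.

Lemma I_small_near_antiphase y K : Rabs (y - 2 * PI * IZR K - PI) <= x -> I y <= R0 / 2.
Proof.
  intro Hy; apply Rabs_le_between in Hy.
  apply (Rle_trans _ (c2 * rpow x q)); [| exact Hhalf_infl].
  destruct (Rle_or_lt (y - 2 * PI * IZR K - PI) 0) as [Hw | Hw].
  - assert (Habs : Rabs (y - 2 * PI * IZR K) = y - 2 * PI * IZR K) by (apply Rabs_right; lra).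
    destruct (I_within_PI y K) as [_ HI]; [rewrite Habs; lra |].
    eapply Rle_trans; [exact HI |]; rewrite Habs.
    apply Rmult_le_compat_l; [lra | apply rpow_le; lra].
  - assert (Habs : Rabs (y - 2 * PI * IZR (K + 1)) = PI - (y - 2 * PI * IZR K - PI))
      by (rewrite plus_IZR, Rabs_left; lra).
    destruct (I_within_PI y (K + 1)) as [_ HI]; [rewrite Habs; lra |].
    eapply Rle_trans; [exact HI |]; rewrite Habs.
    apply Rmult_le_compat_l; [lra | apply rpow_le; lra].
Qed.

Lemma phase_dichotomy y :
  (exists k, Rabs (y - 2 * PI * IZR k) < PI - x) \/
  (exists K, Rabs (y - 2 * PI * IZR K - PI) <= x).
Proof.
  destruct (exists_shift_within_PI y) as [k Hk].
  destruct (Rlt_or_le (Rabs (y - 2 * PI * IZR k)) (PI - x)) as [Hnear | Hhalf_infl_from_k];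
    [left; exists k; exact Hnear | right].
  apply Rabs_le_between in Hk.
  destruct (Rle_or_lt 0 (y - 2 * PI * IZR k)) as [Hv | Hv].
  - rewrite Rabs_right in Hhalf_infl_from_k by lra.
    exists k; apply Rabs_le; lra.
  - rewrite Rabs_left in Hhalf_infl_from_k by lra.
    exists (k - 1)%Z; rewrite minus_IZR; apply Rabs_le; lra.
Qed.

Lemma influence_kept j k T : (j < N)%nat -> 0 <= T ->
  (forall s, 0 < s < T -> L < avg_infl N I theta s) ->
  Rabs (theta j 0 - 2 * PI * IZR k) < PI - x -> c3 * I (theta j 0) <= I (theta j T).
Proof.
  intros Hj HT HL Hk.
  set (u := theta j 0 - 2 * PI * IZR k) in *.
  pose proof (Rabs_def2 _ _ Hk) as Hu.
  assert (Hup := stays_below j k 0 T Hj ltac:(lra) HL ltac:(unfold u in Hu; lra)).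
  assert (Hlo := stays_above j k 0 T Hj ltac:(lra) HL ltac:(unfold u in Hu; lra)).
  pose proof (Rle_abs u); pose proof (Rle_abs (- u)); rewrite Rabs_Ropp in *.
  pose proof (Rmax_l (Rabs u) alpha0); pose proof (Rmax_r (Rabs u) alpha0).
  assert (Hdist : Rabs (theta j T - 2 * PI * IZR k) <= Rmax (Rabs u) alpha0).
  { apply Rabs_le; split.
    - enough (2 * PI * IZR k - Rmax (Rabs u) alpha0 <= Rmin (theta j 0) (2 * PI * IZR k - alpha0))
        by lra.
      apply Rmin_glb; unfold u in *; lra.
    - enough (Rmax (theta j 0) (2 * PI * IZR k + alpha0) <= 2 * PI * IZR k + Rmax (Rabs u) alpha0)
        by lra.
      apply Rmax_lub; unfold u in *; lra. }
  assert (HI := HI2 u ltac:(lra) _ Hdist).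
  unfold u in HI; rewrite !(periodic2pi_sub_Z I k _ HIper) in HI; lra.
Qed.

Lemma influence_retained j T : (j < N)%nat -> 0 <= T ->
  (forall s, 0 < s < T -> L < avg_infl N I theta s) ->
  c3 * (I (theta j 0) - R0 / 2) <= I (theta j T) /\
  (R0 / 2 < I (theta j 0) -> c3 * (I (theta j 0) - R0 / 2) < I (theta j T)).
Proof.
  intros Hj HT HL.
  pose proof (I_nonneg (theta j 0)); pose proof (I_nonneg (theta j T)).
  destruct (phase_dichotomy (theta j 0)) as [[k Hk] | [K HK]].
  - assert (Hkept := influence_kept j k T Hj HT HL Hk).
    split; [| intros _]; nra.
  - assert (Hsmall := I_small_near_antiphase _ K HK).
    split; [nra | lra].
Qed.

(* Oscillators starting within [PI - x] of a peak keep a fraction [c3] of their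
   influence, the others start with influence at most [R0 / 2], and since the
   average is [R0] at least one oscillator is of the first kind. *)
Lemma avg_infl_lower_bound T : 0 <= T ->
  (forall s, 0 < s < T -> L < avg_infl N I theta s) -> L < avg_infl N I theta T.
Proof.
  intros HT HL.
  assert (HN0 : 0 < INR N) by (apply lt_0_INR; lia).
  destruct (rsum_gt_exists N (fun j => I (theta j 0)) (R0 / 2)) as [j0 [Hj0 Hbig]].
  { rewrite rsum_avg_infl by exact HN; nra. }
  assert (Hsum : rsum N (fun j => c3 * (I (theta j 0) - R0 / 2)) <
                 rsum N (fun j => I (theta j T))).
  { apply rsum_lt.
    - intros j Hj; apply (influence_retained j T Hj HT HL).
    - exists j0; split; [exact Hj0 | apply (influence_retained j0 T Hj0 HT HL), Hbig]. }
  rewrite rsum_affine, !rsum_avg_infl in Hsum by exact HN.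
  apply (Rmult_lt_reg_l (INR N)); [exact HN0 | lra].
Qed.

Lemma avg_infl_gt t : 0 <= t -> L < avg_infl N I theta t.
Proof.
  intro Ht; destruct (Rlt_or_le L (avg_infl N I theta t)) as [| Hle]; [assumption | exfalso].
  destruct (first_crossing (avg_infl N I theta) 0 t L) as [T [HT [HRT Hbefore]]];
    [exact Ht | | nra | exact Hle |].
  { eapply continuous_on_subset; [| exact avg_infl_continuous]; simpl; intros; lra. }
  assert (L < avg_infl N I theta T); [| lra].
  apply avg_infl_lower_bound; [lra | intros s Hs; apply Hbefore; lra].
Qed.

Lemma stays_below_forever i k t0 t : (i < N)%nat -> 0 <= t0 <= t ->
  theta i t0 < 2 * PI * IZR k + PI - x ->
  theta i t <= Rmax (theta i t0) (2 * PI * IZR k + alpha0).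
Proof.
  intros Hi Ht; apply stays_below; [exact Hi | exact Ht |].
  intros s Hs; apply avg_infl_gt; lra.
Qed.

Lemma stays_above_forever i k t0 t : (i < N)%nat -> 0 <= t0 <= t ->
  2 * PI * IZR k - (PI - x) < theta i t0 ->
  Rmin (theta i t0) (2 * PI * IZR k - alpha0) <= theta i t.
Proof.
  intros Hi Ht; apply stays_above; [exact Hi | exact Ht |].
  intros s Hs; apply avg_infl_gt; lra.
Qed.

Lemma confined_near_peak i k : (i < N)%nat ->
  Rabs (theta i 0 - 2 * PI * IZR k) < PI - x ->
  forall t, 0 <= t ->
    Rmin (theta i 0) (2 * PI * IZR k - alpha0) <= theta i t <=
    Rmax (theta i 0) (2 * PI * IZR k + alpha0).
Proof.
  intros Hi Hk t Ht; apply Rabs_def2 in Hk.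
  split; [apply stays_above_forever | apply stays_below_forever]; (assumption || lra).
Qed.

(* An oscillator starting within [x] of the antipode [2 K PI + PI] is kept in
   [[2 K PI - alpha0, 2 K PI + 2 PI + alpha0]]; it cannot both fall below
   [2 K PI + PI - x] and rise above [2 K PI + PI + x], since whichever happens
   first traps it on that side for good. *)
Lemma confined_near_antiphase i K : (i < N)%nat ->
  Rabs (theta i 0 - 2 * PI * IZR K - PI) <= x ->
  exists A B, B - A < 2 * PI /\ forall t, 0 <= t -> A <= theta i t <= B.
Proof.
  intros Hi HK; apply Rabs_le_between in HK.
  assert (HK1 : 2 * PI * IZR (K + 1) = 2 * PI * IZR K + 2 * PI) by (rewrite plus_IZR; ring).
  assert (Hup : forall t, 0 <= t -> theta i t <= 2 * PI * IZR K + 2 * PI + alpha0).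
  { intros t Ht.
    eapply Rle_trans; [apply (stays_below_forever i (K + 1) 0 t); [exact Hi | lra | lra] |].
    apply Rmax_lub; lra. }
  assert (Hlo : forall t, 0 <= t -> 2 * PI * IZR K - alpha0 <= theta i t).
  { intros t Ht.
    eapply Rle_trans; [| apply (stays_above_forever i K 0 t); [exact Hi | lra | lra]].
    apply Rmin_glb; lra. }
  set (c := 2 * PI * IZR K + PI) in *.
  destruct (classic (forall t, 0 <= t -> c - x <= theta i t)) as [Hhigh | Hnot_high].
  { exists (c - x), (2 * PI * IZR K + 2 * PI + alpha0); split; [unfold c; lra |].
    intros t Ht; split; [apply Hhigh | apply Hup]; exact Ht. }
  destruct (classic (forall t, 0 <= t -> theta i t <= c + x)) as [Hlow | Hnot_low].
  { exists (2 * PI * IZR K - alpha0), (c + x); split; [unfold c; lra |].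
    intros t Ht; split; [apply Hlo | apply Hlow]; exact Ht. }
  exfalso.
  apply not_all_ex_not in Hnot_high as [td Htd]; apply imply_to_and in Htd as [Htd0 Htd].
  apply not_all_ex_not in Hnot_low as [tu Htu]; apply imply_to_and in Htu as [Htu0 Htu].
  destruct (Rle_or_lt td tu) as [Horder | Horder].
  - assert (H := stays_below_forever i K td tu Hi ltac:(lra) ltac:(unfold c in Htd; lra)).
    assert (Rmax (theta i td) (2 * PI * IZR K + alpha0) < c - x)
      by (apply Rmax_lub_lt; unfold c in *; lra).
    lra.
  - assert (H := stays_above_forever i (K + 1) tu td Hi ltac:(lra) ltac:(unfold c in Htu; lra)).
    assert (c + x < Rmin (theta i tu) (2 * PI * IZR (K + 1) - alpha0))
      by (apply Rmin_glb_lt; unfold c in *; lra).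
    lra.
Qed.

Lemma theta_confined i : (i < N)%nat ->
  exists A B, B - A < 2 * PI /\ forall t, 0 <= t -> A <= theta i t <= B.
Proof.
  intro Hi; destruct (phase_dichotomy (theta i 0)) as [[k Hk] | [K HK]].
  - exists (Rmin (theta i 0) (2 * PI * IZR k - alpha0)),
           (Rmax (theta i 0) (2 * PI * IZR k + alpha0)); split.
    + apply Rabs_def2 in Hk.
      assert (Rmax (theta i 0) (2 * PI * IZR k + alpha0) <= 2 * PI * IZR k + (PI - x))
        by (apply Rmax_lub; lra).
      assert (2 * PI * IZR k - (PI - x) <= Rmin (theta i 0) (2 * PI * IZR k - alpha0))
        by (apply Rmin_glb; lra).
      lra.
    + apply (confined_near_peak i k Hi Hk).
  - apply (confined_near_antiphase i K Hi HK).
Qed.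

Lemma avg_infl_gt_and_theta_confined :
  (forall t, 0 <= t -> L < avg_infl N I theta t) /\
  (forall i, (i < N)%nat ->
     exists A B, B - A < 2 * PI /\ forall t, 0 <= t -> A <= theta i t <= B).
Proof. split; [exact avg_infl_gt | exact theta_confined]. Qed.

End Winfree.

Theorem theorem2p7
  (S I : R -> R) (alpha0 p q c1 c2 c3 kappa : R) (N : nat)
  (omega : nat -> R) (theta : nat -> R -> R)
  (HSper : periodic2pi S) (HIper : periodic2pi I)
  (HSlip : lipschitz S) (HIlip : lipschitz I)
  (Ha0 : 0 < alpha0 < PI) (Hp : 1 <= p) (Hq : 1 <= q)
  (Hc1 : 0 < c1) (Hc2 : 0 < c2) (Hc3 : 0 < c3 <= 1)
  (HS1 : forall th, alpha0 <= th <= PI -> S th <= - c1 * rpow (PI - th) p)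
  (HS2 : forall th, - PI <= th <= - alpha0 -> S th >= c1 * rpow (th + PI) p)
  (HI1 : forall th, - PI <= th <= PI -> 0 <= I th <= c2 * rpow (PI - Rabs th) q)
  (HI2 : forall th, - PI <= th <= PI ->
           forall phi, Rabs phi <= Rmax (Rabs th) alpha0 -> I phi >= c3 * I th)
  (HN : (1 <= N)%nat)
  (Hode : forall i, (i < N)%nat -> forall t, 0 < t ->
     derivable_pt_lim (theta i) t
       (omega i + kappa / INR N * rsum N (fun j => I (theta j t)) * S (theta i t)))
  (Hcont0 : forall i, (i < N)%nat -> forall eps, 0 < eps ->
     exists delta, 0 < delta /\
       forall t, 0 <= t < delta -> Rabs (theta i t - theta i 0) < eps)
  (HR0 : 0 < avg_infl N I theta 0)
  (Hkappa : kappa > Rmax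
     (2 * rpow (2 * c2) (p / q) / (c1 * c3) * rmaxabs N omega
        / rpow (avg_infl N I theta 0) (1 + p / q))
     (2 / (c1 * c3 * rpow (PI - alpha0) p) * rmaxabs N omega
        / avg_infl N I theta 0)) :
  (forall t, 0 <= t -> avg_infl N I theta t > c3 * avg_infl N I theta 0 / 2) /\
  (forall i, (i < N)%nat ->
     exists M m,
       is_lub (fun x => exists t, 0 <= t /\ x = theta i t) M /\
       is_glb (fun x => exists t, 0 <= t /\ x = theta i t) m /\
       M - m < 2 * PI).
Proof.
  assert (Hkpos : 0 < kappa).
  { apply (coupling_pos alpha0 p c1 c3 (avg_infl N I theta 0) (rmaxabs N omega));
      [lra | lra | lra | exact HR0 | apply rmaxabs_nonneg |].
    eapply Rle_lt_trans; [apply Rmax_r | exact Hkappa]. }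
  destruct (coupling_threshold alpha0 p q c1 c2 c3 kappa (avg_infl N I theta 0) (rmaxabs N omega))
    as [x [Hx [Hcoupling Hhalf_infl]]]; [lra .. | exact HR0 | exact Hkpos | exact Hkappa |].
  destruct (avg_infl_gt_and_theta_confined S I alpha0 p q c1 c2 c3 kappa x N omega theta
              HSper HIper HIlip ltac:(lra) Hx ltac:(lra) ltac:(lra) Hc1 Hc2 Hc3 Hkpos
              HS1 HS2 HI1 HI2 HN Hode Hcont0 HR0 Hcoupling Hhalf_infl) as [HR_lower Hconfined].
  split; [intros t Ht; apply Rlt_gt, HR_lower, Ht |].
  intros i Hi; destruct (Hconfined i Hi) as [A [B [HAB Hrange]]].
  destruct (lub_glb_within (fun y => exists t, 0 <= t /\ y = theta i t) A B)
    as [M [m [HM [Hm [HAm HMB]]]]].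
  - exists (theta i 0), 0; split; [lra | reflexivity].
  - intros y [t [Ht ->]]; apply Hrange, Ht.
  - exists M, m; split; [exact HM | split; [exact Hm | lra]].
Qed.
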